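(* Let $W$ be an eventually periodic subset of $\mathbb{Z}^d$ with periods $u_1,\dots,u_d$, and let $\mathscr{W}_1,\mathcal{W}$ be as defined in the context. If the ordered pair $(\pi(\mathscr{W}_1),\pi(\mathcal{W}))$ admits a minimal complement in $\mathbb{Z}^d/\mathcal{L}$, then $W$ has a minimal complement in $\mathbb{Z}^d$.
   Context: $d\geqslant1$, $\mathbb{N}=\{0,1,2,\dots\}$. Let $u_1,\dots,u_d\in\mathbb{Z}^d$ satisfy no nontrivial $\mathbb{Z}$-linear relation, $\mathcal{L}=\mathbb{Z}u_1+\dots+\mathbb{Z}u_d$, $P=\mathbb{N}u_1+\dots+\mathbb{N}u_d$, $\pi:\mathbb{Z}^d\to\mathbb{Z}^d/\mathcal{L}$ the quotient map. A nonempty $X\subseteq\mathbb{Z}^d$ is eventually periodic with periods $u_1,\dots,u_d$ if $X\subseteq F+P$ for some nonempty finite $F\subseteq\mathbb{Z}^d$ and $x+P\subseteq X$ for all but finitely many $x\in X$. For such $W$: $\mathscr{W}=\{w\in W:w+P\not\subseteq W\}$; $\mathcal{W}=\{w\in W\setminus\mathscr{W}:(w-P)\cap(W\setminus\mathscr{W})=\{w\}\}$; $\mathscr{W}_1$ is the set of elements of $\mathscr{W}$ congruent modulo $\mathcal{L}$ to no element of $\mathcal{W}$. An ordered pair $(\mathscr{Q}_1,\mathcal{Q})$ of two nonempty disjoint subsets of $\mathbb{Z}^d/\mathcal{L}$ admits a minimal complement in $\mathbb{Z}^d/\mathcal{L}$ if there is a nonempty $\mathcal{N}\subseteq\mathbb{Z}^d/\mathcal{L}$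 with (i) $\mathcal{N}+(\mathcal{Q}\cup\mathscr{Q}_1)=\mathbb{Z}^d/\mathcal{L}$ and (ii) for every $n\in\mathcal{N}$ there is $q\in\mathscr{Q}_1$ with $n+q\neq n'+q'$ for all $n'\in\mathcal{N}\setminus\{n\}$, $q'\in\mathcal{Q}\cup\mathscr{Q}_1$. A nonempty $M\subseteq\mathbb{Z}^d$ is a complement of $W$ if $M+W=\mathbb{Z}^d$, and a minimal complement if no proper subset of $M$ is a complement of $W$. *)

From HB Require Import structures.
From mathcomp Require Import all_boot all_order all_algebra.
Set Implicit Arguments. Unset Strict Implicit. Unset Printing Implicit Defensive.
Import GRing.Theory Num.Theory.
Local Open Scope ring_scope.

Definition vec (d : nat) := 'rV[int]_d.

Definition Zindep (d : nat) (u : 'I_d -> vec d) : Prop :=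
  forall c : 'I_d -> int, \sum_(i < d) c i *: u i = 0 -> forall i, c i = 0.

Definition inL (d : nat) (u : 'I_d -> vec d) (x : vec d) : Prop :=
  exists c : 'I_d -> int, x = \sum_(i < d) c i *: u i.

Definition inP (d : nat) (u : 'I_d -> vec d) (x : vec d) : Prop :=
  exists c : 'I_d -> nat, x = \sum_(i < d) (c i)%:Z *: u i.

Definition eventually_periodic (d : nat) (u : 'I_d -> vec d) (X : vec d -> Prop)
  : Prop :=
  (exists x, X x) /\
  (exists F : seq (vec d), F != [::] /\
     forall x, X x -> exists2 f, f \in F & exists p, inP u p /\ x = f + p) /\
  (exists E : seq (vec d),
     forall x, X x -> x \notin E -> forall p, inP u p -> X (x + p)).

Definition scrW (d : nat) (u : 'I_d -> vec d) (W : vec d -> Prop) (w : vec d)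
  : Prop :=
  W w /\ ~ (forall p, inP u p -> W (w + p)).

Definition calW (d : nat) (u : 'I_d -> vec d) (W : vec d -> Prop) (w : vec d)
  : Prop :=
  (W w /\ ~ scrW u W w) /\
  forall p, inP u p -> W (w - p) -> ~ scrW u W (w - p) -> w - p = w.

Definition scrW1 (d : nat) (u : 'I_d -> vec d) (W : vec d -> Prop) (w : vec d)
  : Prop :=
  scrW u W w /\ ~ (exists v, calW u W v /\ inL u (w - v)).

Definition img (A B : Type) (f : A -> B) (S : A -> Prop) : B -> Prop :=
  fun b => exists2 a, S a & f a = b.

Definition admits_min_compl (G : zmodType) (Q1 Q : G -> Prop) : Prop :=
  (exists q, Q1 q) /\ (exists q, Q q) /\ (forall q, Q1 q -> ~ Q q) /\
  exists N : G -> Prop,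
    (exists n, N n) /\
    (forall g, exists n q, N n /\ (Q q \/ Q1 q) /\ g = n + q) /\
    (forall n, N n -> exists2 q, Q1 q &
       forall n' q', N n' -> n' <> n -> (Q q' \/ Q1 q') -> n + q <> n' + q').

Definition is_complement (d : nat) (M W : vec d -> Prop) : Prop :=
  (exists m, M m) /\ forall z, exists m w, M m /\ W w /\ z = m + w.

Definition is_min_complement (d : nat) (M W : vec d -> Prop) : Prop :=
  is_complement M W /\
  forall M' : vec d -> Prop, (forall x, M' x -> M x) -> is_complement M' W ->
    forall x, M x -> M' x.

(* Reduce modulo an integer T that is a multiple of the index of L in Z^d and
   exceeds twice every coordinate of the finite set \mathscr{W}: congruence mod T
   then implies congruence mod L, and distinct points of \mathscr{W} stay distinct
   mod T.  Among the sets B of residues mod T whose preimage M_B lies over the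
   given N and is a complement of W, take one of least cardinality.  Every x in
   M_B is then essential: removing its class leaves some z uncovered, so every
   representation of z passes through the class of x.  If the W-part of z lies in
   \mathscr{W}_1, it is a witness w for which x + w has x as its only M_B-part;
   otherwise it is congruent mod L to an element of \mathcal{W}, and the element of
   \mathscr{W}_1 that the minimality of N attaches to pi x serves instead, because
   \mathcal{W} + P lies in W. *)

From HB Require Import structures.
From mathcomp Require Import all_boot all_order all_algebra.
From mathcomp Require Import zify boolp.
Set Implicit Arguments. Unset Strict Implicit. Unset Printing Implicit Defensive.
Import GRing.Theory Num.Theory.
Local Open Scope ring_scope.

Section Lattice.
Variables (d : nat) (u : 'I_d -> vec d).

Lemma inP_inL p : inP u p -> inL u p.
Proof. by case=> c ->; exists (fun i => (c i)%:Z). Qed.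

Lemma mulmx_rows (c : 'rV[int]_d) : c *m \matrix_i u i = \sum_i c 0 i *: u i.
Proof. by rewrite mulmx_sum_row; apply: eq_bigr => i _; rewrite rowK. Qed.

Lemma inL_scale_det x : inL u (\det (\matrix_i u i) *: x).
Proof.
exists (fun i => (x *m \adj (\matrix_i u i)) 0 i).
by rewrite -mulmx_rows -mulmxA mul_adj_mx mul_mx_scalar.
Qed.

Hypothesis u_indep : Zindep u.

Lemma det_rows_neq0 : \det (\matrix_i u i) != 0.
Proof.
apply/det0P => -[c /eqP c_neq0]; rewrite mulmx_rows => /u_indep c0.
by apply: c_neq0; apply/rowP => i; rewrite c0 mxE.
Qed.

Lemma index_scale_inL : exists2 D : nat, (0 < D)%N & forall x, inL u (D%:Z *: x).
Proof.
set U := \matrix_i u i.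
exists `|\det U|%N => [|x]; first by rewrite absz_gt0 det_rows_neq0.
by rewrite abszEsg mulrC -scalerA; apply: inL_scale_det.
Qed.

Lemma inP_coef_inj (a b : 'I_d -> nat) :
  \sum_i (a i)%:Z *: u i = \sum_i (b i)%:Z *: u i -> a =1 b.
Proof.
move=> eq_ab i; have /u_indep/(_ i)/eqP : \sum_i ((a i)%:Z - (b i)%:Z) *: u i = 0.
  by rewrite (eq_bigr _ (fun i _ => scalerBl _ _ _)) sumrB eq_ab subrr.
by rewrite subr_eq0 => /eqP [].
Qed.

Lemma sum_coefD (a b : 'I_d -> nat) :
  \sum_i (a i + b i)%N%:Z *: u i = \sum_i (a i)%:Z *: u i + \sum_i (b i)%:Z *: u i.
Proof. by rewrite -big_split; apply: eq_bigr => i _; rewrite PoszD scalerDl. Qed.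

Lemma cone_weight_bounded (w : vec d) (F : seq (vec d)) :
  exists B, forall f c, f \in F -> w - f = \sum_i (c i)%:Z *: u i ->
    (\sum_i c i <= B)%N.
Proof.
elim: F => [|f F [B leB]]; first by exists 0%N.
have [[c0 f_c0]|no_c0] :=
  pselect (exists c0 : 'I_d -> nat, w - f = \sum_i (c0 i)%:Z *: u i).
  exists (\sum_i c0 i + B)%N => g c; rewrite inE => /predU1P[-> f_c|Fg g_c].
    by rewrite (eq_bigr _ (fun i _ => inP_coef_inj (etrans (esym f_c) f_c0) i)) leq_addr.
  exact: leq_trans (leB g c Fg g_c) (leq_addl _ _).
exists B => g c; rewrite inE => /predU1P[-> f_c|]; last exact: leB.
by case: no_c0; exists c.
Qed.

Lemma exists_minimal_below (A : vec d -> Prop) (F : seq (vec d)) :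
  (forall x, A x -> exists2 f, f \in F & exists p, inP u p /\ x = f + p) ->
  forall w, A w ->
  exists v, (A v /\ forall p, inP u p -> A (v - p) -> v - p = v) /\ inP u (w - v).
Proof.
move=> A_sub w Aw; have [B leB] := cone_weight_bounded w F.
pose below k := `[< exists x c,
  [/\ A x, w - x = \sum_i (c i)%:Z *: u i & \sum_i c i = k] >].
have below0 : exists k, below k.
  exists 0%N; apply/asboolP; exists w, (fun=> 0%N); split => //; last by rewrite big1.
  by rewrite subrr big1 // => i _; rewrite scale0r.
have below_le k : below k -> (k <= B)%N.
  move=> /asboolP[x [c [Ax w_x <-]]]; have [f Ff [_ [[e ->] x_fe]]] := A_sub x Ax.
  apply: leq_trans (leB f (fun i => c i + e i)%N Ff _).
    by rewrite big_split leq_addr.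
  by rewrite sum_coefD -w_x x_fe opprD addrA subrK.
have [k /asboolP[x [c [Ax w_x <-]]] k_max] := ex_maxnP below0 below_le.
exists x; split; last by exists c.
split => // _ [e ->] A_xe.
have /k_max : below (\sum_i c i + \sum_i e i)%N.
  apply/asboolP; exists (x - \sum_i (e i)%:Z *: u i), (fun i => c i + e i)%N.
  by split; rewrite ?big_split // sum_coefD -w_x opprB addrA addrAC.
rewrite -[X in (_ <= X)%N]addn0 leq_add2l leqn0 sum_nat_eq0 => /forallP e0.
by rewrite big1 ?subr0 // => i _; rewrite (eqP (e0 i)) scale0r.
Qed.

End Lattice.

Section Residues.
Variables (d T : nat).
Hypothesis T_gt1 : (1 < T)%N.

Lemma intr_Zp_eq0 (a : int) : (a%:~R == 0 :> 'Z_T) = (T %| a)%Z.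
Proof.
have natr_eq0 n : (n%:R == 0 :> 'Z_T) = (T %| n)%N.
  by rewrite -(inj_eq val_inj) /= val_Zp_nat.
by case: a => n; rewrite ?NegzE ?mulrNz ?oppr_eq0 ?dvdzN natr_eq0.
Qed.

Lemma map_intr_eq0 (x : vec d) :
  map_mx intr x = 0 :> 'rV['Z_T]_d <-> forall j, (T%:Z %| x ord0 j)%Z.
Proof.
split => [/rowP x0 j | T_x]; last by apply/rowP => j; apply/eqP; rewrite !mxE intr_Zp_eq0.
by have /eqP := x0 j; rewrite !mxE intr_Zp_eq0.
Qed.

Lemma map_intr_inj_bounded (R : nat) (x y : vec d) : (2 * R < T)%N ->
  (forall j, `|x ord0 j| <= R)%N -> (forall j, `|y ord0 j| <= R)%N ->
  map_mx intr x = map_mx intr y :> 'rV['Z_T]_d -> x = y.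
Proof.
move=> RT x_le y_le /eqP; rewrite -subr_eq0 -raddfB => /eqP/map_intr_eq0 T_xy.
apply/rowP => j; have := T_xy j; rewrite !mxE dvdzE.
have [/eqP|xy_pos /(dvdn_leq xy_pos)] := posnP `|x ord0 j - y ord0 j|%N.
  by rewrite absz_eq0 subr_eq0 => /eqP.
by have := x_le j; have := y_le j; lia.
Qed.

Lemma map_intr_ker_inL u (D : nat) : (D %| T)%N -> (forall x, inL u (D%:Z *: x)) ->
  forall x, map_mx intr x = 0 :> 'rV['Z_T]_d -> inL u x.
Proof.
move=> /dvdnP[K T_KD] D_L x /map_intr_eq0 T_x.
suff -> : x = D%:Z *: (K%:Z *: \row_j (x ord0 j %/ T%:Z)%Z) by apply: D_L.
apply/rowP => j; rewrite !mxE mulrA -PoszM mulnC -T_KD [RHS]mulrC divzK //.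
Qed.

Lemma inL_lift_inP u y : inL u y ->
  exists2 p, inP u p & map_mx intr y = map_mx intr p :> 'rV['Z_T]_d.
Proof.
case=> c ->; exists (\sum_i `|(c i %% T%:Z)%Z|%N%:Z *: u i); first by eexists.
apply/eqP; rewrite -subr_eq0 -raddfB; apply/eqP/map_intr_eq0 => j.
suff -> : \sum_i c i *: u i - \sum_i `|(c i %% T%:Z)%Z|%N%:Z *: u i
    = T%:Z *: \sum_i (c i %/ T%:Z)%Z *: u i by rewrite mxE dvdz_mulr.
rewrite -sumrB scaler_sumr; apply: eq_bigr => i _.
rewrite gez0_abs ?modz_ge0 -?lt0n ?(ltnW T_gt1) // -scalerBl scalerA.
by rewrite {1}(divz_eq (c i) T%:Z) addrK mulrC.
Qed.

End Residues.

Definition essential d (M W : vec d -> Prop) (x : vec d) : Prop :=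
  exists2 w, W w & forall m w', M m -> W w' -> x + w = m + w' -> m = x.

Lemma cover_is_complement d (M W : vec d -> Prop) :
  (forall z, exists m w, M m /\ W w /\ z = m + w) -> is_complement M W.
Proof. by move=> cover; split=> //; have [m [w [Mm _]]] := cover 0; exists m. Qed.

Lemma essential_min_complement d (M W : vec d -> Prop) :
  is_complement M W -> (forall x, M x -> essential M W x) -> is_min_complement M W.
Proof.
move=> compl_M ess_M; split=> // M' sub_M' [_ cover_M'] x Mx.
have [w Ww x_unique] := ess_M x Mx.
have [m [w' [M'm [Ww' xw]]]] := cover_M' (x + w).
by rewrite -(x_unique m w' (sub_M' m M'm) Ww' xw).
Qed.

Section ResidueComplement.
Variables (d : nat) (u : 'I_d -> vec d) (G : zmodType) (pi : vec d -> G).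
Variables (W : vec d -> Prop) (F : seq (vec d)).
Hypothesis u_indep : Zindep u.
Hypothesis piD : forall x y, pi (x + y) = pi x + pi y.
Hypothesis pi_eq0 : forall x, pi x = 0 <-> inL u x.
Hypothesis W_sub :
  forall x, W x -> exists2 f, f \in F & exists p, inP u p /\ x = f + p.

Lemma piB x y : pi (x - y) = pi x - pi y.
Proof. by apply: (addIr (pi y)); rewrite -piD !subrK. Qed.

Lemma pi_eq x y : pi x = pi y <-> inL u (x - y).
Proof.
split=> [xy | /pi_eq0]; first by apply/pi_eq0; rewrite piB xy subrr.
by rewrite piB => /eqP; rewrite subr_eq0 => /eqP.
Qed.

Lemma calW_below w : W w -> ~ scrW u W w -> exists v, calW u W v /\ inP u (w - v).
Proof.
move=> Ww not_scrW_w.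
have [v [[Av v_min] w_v]] := exists_minimal_below u_indep
  (A := fun x => W x /\ ~ scrW u W x) (fun x Ax => W_sub Ax.1) (conj Ww not_scrW_w).
by exists v; split=> //; split=> // p Pp Wvp not_scrW_vp; apply: v_min.
Qed.

Lemma calW_addP v p : calW u W v -> inP u p -> W (v + p).
Proof.
move=> [[Wv not_scrW_v] _] Pp; apply: contrapT => not_W.
by apply: not_scrW_v; split=> // all_W; apply/not_W/all_W.
Qed.

Lemma W_pi_cases w :
  W w -> (exists v, calW u W v /\ pi v = pi w) \/ scrW1 u W w.
Proof.
move=> Ww; have [scrW_w|not_scrW_w] := pselect (scrW u W w).
  have [[v [calW_v w_v]]|no_v] := pselect (exists v, calW u W v /\ inL u (w - v)).
    by left; exists v; split=> //; symmetry; apply/pi_eq.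
  by right.
have [v [calW_v w_v]] := calW_below Ww not_scrW_w.
by left; exists v; split=> //; symmetry; apply/pi_eq; apply: inP_inL.
Qed.

Lemma pi_W_classes w :
  W w -> img pi (calW u W) (pi w) \/ img pi (scrW1 u W) (pi w).
Proof.
by case/W_pi_cases => [[v [calW_v <-]]|scrW1_w]; [left; exists v | right; exists w].
Qed.

Lemma scrW1_pi_scrW s w : scrW1 u W s -> W w -> pi w = pi s -> scrW u W w.
Proof.
move=> [_ no_v] Ww ws; case: (W_pi_cases Ww) => [[v [calW_v vw]]|[]//].
by case: no_v; exists v; split=> //; apply/pi_eq; rewrite vw ws.
Qed.

Variable N : G -> Prop.
Hypothesis N_cover : forall g, exists n q,
  N n /\ (img pi (calW u W) q \/ img pi (scrW1 u W) q) /\ g = n + q.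
Hypothesis N_unique : forall n, N n -> exists2 q, img pi (scrW1 u W) q &
  forall n' q', N n' -> n' <> n ->
    (img pi (calW u W) q' \/ img pi (scrW1 u W) q') -> n + q <> n' + q'.

Variables (K : finZmodType) (rho : {additive vec d -> K}).
Hypothesis rho_ker : forall x, rho x = 0 -> inL u x.
Hypothesis rho_inj_scrW :
  forall x y, scrW u W x -> scrW u W y -> rho x = rho y -> x = y.
Hypothesis rho_lift : forall y, inL u y -> exists2 p, inP u p & rho y = rho p.

Lemma rho_pi x y : rho x = rho y -> pi x = pi y.
Proof. by move=> /eqP; rewrite -subr_eq0 -raddfB => /eqP/rho_ker/pi_eq. Qed.

Definition admissible (B : {set K}) : Prop :=
  (forall x, rho x \in B -> N (pi x)) /\ is_complement (fun x => rho x \in B) W.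

Lemma admissible_exists : exists B, admissible B.
Proof.
exists [set k | `[< exists2 x, rho x = k & N (pi x) >]]; split.
  by move=> x; rewrite inE => /asboolP[y /rho_pi <-].
apply: cover_is_complement => z; have [n [q [Nn [Wq zq]]]] := N_cover (pi z).
have [w Ww wq] : exists2 w, W w & pi w = q.
  by case: Wq => -[w [[Ww _] _] <-]; exists w.
exists (z - w), w; split; last by rewrite subrK.
by rewrite inE; apply/asboolP; exists (z - w); rewrite // piB zq wq addrK.
Qed.

Lemma admissible_min :
  exists2 B, admissible B & forall B', admissible B' -> (#|B| <= #|B'|)%N.
Proof.
pose admissible_card n := `[< exists B, admissible B /\ #|B| = n >].
have [B adm_B] := admissible_exists.
have ex_card : exists n, admissible_card n by exists #|B|; apply/asboolP; exists B.
case: (ex_minnP ex_card) => n /asboolP[B0 [adm_B0 <-]] n_min.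
by exists B0 => // B' adm_B'; apply/n_min/asboolP; exists B'.
Qed.

Lemma unique_rep_scrW1 x s m w :
  scrW1 u W s -> W w -> rho m = rho x -> x + s = m + w -> m = x.
Proof.
move=> scrW1_s Ww mx xs_mw.
have ws : rho w = rho s.
  have -> : w = x + s - m by rewrite xs_mw addrC addKr.
  by rewrite raddfB raddfD mx addrC addKr.
have w_s : w = s := rho_inj_scrW (scrW1_pi_scrW scrW1_s Ww (rho_pi ws)) scrW1_s.1 ws.
by apply: (addIr s); rewrite xs_mw w_s.
Qed.

Section MinimalAdmissible.
Variable B : {set K}.
Hypothesis adm_B : admissible B.
Hypothesis B_min : forall B', admissible B' -> (#|B| <= #|B'|)%N.

Lemma forced_class x : rho x \in B -> exists m1 w1, [/\ rho m1 = rho x, W w1 &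
  forall m w, rho m \in B -> W w -> m1 + w1 = m + w -> rho m = rho x].
Proof.
move=> Bx; have [N_B [_ cover_B]] := adm_B.
have not_adm : ~ admissible (B :\ rho x).
  by move=> /B_min; rewrite (cardsD1 (rho x) B) Bx add1n ltnn.
have [z z_unrep] : exists z, forall m w, rho m \in B :\ rho x -> W w -> z <> m + w.
  apply: contrapT => all_rep; apply: not_adm; split.
    by move=> y; rewrite in_setD1 => /andP[_ /N_B].
  apply: cover_is_complement => z; apply: contrapT => no_rep; apply: all_rep.
  by exists z => m w Bm Ww zmw; apply: no_rep; exists m, w.
have forced m w : rho m \in B -> W w -> z = m + w -> rho m = rho x.
  move=> Bm Ww zmw; apply: contrapT => mx; apply: (z_unrep m w) => //.
  by rewrite in_setD1 Bm andbT; apply/eqP.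
have [m1 [w1 [Bm1 [Ww1 z_mw1]]]] := cover_B z.
exists m1, w1; split=> //; first exact: forced Bm1 Ww1 z_mw1.
by move=> m w Bm Ww mw; apply: forced Bm Ww _; rewrite z_mw1.
Qed.

Lemma forced_scrW1_essential x m1 w1 :
  rho m1 = rho x ->
  (forall m w, rho m \in B -> W w -> m1 + w1 = m + w -> rho m = rho x) ->
  scrW1 u W w1 -> essential (fun m => rho m \in B) W x.
Proof.
move=> mx1 forced scrW1_w1; exists w1; first exact: scrW1_w1.1.1.
move=> m w Bm Ww xw1_mw.
apply: (unique_rep_scrW1 scrW1_w1 Ww _ xw1_mw).
have Bm' : rho (m + (m1 - x)) \in B by rewrite raddfD raddfB mx1 subrr addr0.
have := forced _ _ Bm' Ww.
rewrite raddfD raddfB mx1 subrr addr0; apply.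
by rewrite [RHS]addrAC -xw1_mw [RHS]addrC addrA subrK.
Qed.

Lemma forced_calW_essential x m1 w1 v :
  rho x \in B -> rho m1 = rho x ->
  (forall m w, rho m \in B -> W w -> m1 + w1 = m + w -> rho m = rho x) ->
  calW u W v -> pi v = pi w1 -> essential (fun m => rho m \in B) W x.
Proof.
move=> Bx mx1 forced calW_v vw1; have [N_B _] := adm_B.
have [_ [s scrW1_s <-] s_unique] := N_unique (N_B x Bx).
exists s; first exact: scrW1_s.1.1.
move=> m w Bm Ww xs_mw.
apply: (unique_rep_scrW1 scrW1_s Ww _ xs_mw).
have pi_mx : pi m = pi x.
  apply: contrapT => mx; apply: (s_unique _ _ (N_B m Bm) mx (pi_W_classes Ww)).
  by rewrite -!piD xs_mw.
pose y := m1 + w1 - v - m.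
(* [y] lies in L; shifted into the cone it turns [m1 + w1] into a representation
   through the class of [m], with W-part [v + p]. *)
have [p Pp yp] : exists2 p, inP u p & rho y = rho p.
  apply/rho_lift/pi_eq0.
  by rewrite /y !piB piD (rho_pi mx1) pi_mx -vw1 addrK subrr.
have my : m + y = m1 + w1 - v by rewrite /y addrC subrK.
have Bmyp : rho (m + y - p) = rho m by rewrite raddfB raddfD yp addrK.
have := forced (m + y - p) (v + p); rewrite Bmyp; apply=> //.
  exact: calW_addP.
by rewrite [v + p]addrC addrA subrK my subrK.
Qed.

Lemma min_admissible_essential x :
  rho x \in B -> essential (fun m => rho m \in B) W x.
Proof.
move=> Bx; have [m1 [w1 [mx1 Ww1 forced]]] := forced_class Bx.
case: (W_pi_cases Ww1) => [[v [calW_v vw1]]|scrW1_w1].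
  exact: forced_calW_essential Bx mx1 forced calW_v vw1.
exact: forced_scrW1_essential mx1 forced scrW1_w1.
Qed.

End MinimalAdmissible.

Theorem exists_min_complement : exists M, is_min_complement M W.
Proof.
have [B adm_B B_min] := admissible_min.
exists (fun x => rho x \in B); apply: essential_min_complement; first exact: adm_B.2.
exact: min_admissible_essential.
Qed.

End ResidueComplement.

Theorem lemma4p17 (d : nat) (u : 'I_d -> 'rV[int]_d) (G : zmodType)
  (pi : 'rV[int]_d -> G) (W : 'rV[int]_d -> Prop) :
  (0 < d)%N ->
  Zindep u ->
  (forall x y, pi (x + y) = pi x + pi y) ->
  (forall g, exists x, pi x = g) ->
  (forall x, pi x = 0 <-> inL u x) ->
  eventually_periodic u W ->
  admits_min_compl (img pi (scrW1 u W)) (img pi (calW u W)) ->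
  exists M : 'rV[int]_d -> Prop, is_min_complement M W.
Proof.
move=> _ u_indep piD _ pi_eq0 [_ [[F [_ W_sub]] [E E_periodic]]]
  [_ [_ [_ [N [_ [N_cover N_unique]]]]]].
have scrW_E x : scrW u W x -> x \in E.
  move=> [Wx not_periodic]; apply: contrapT => /negP x_E.
  exact/not_periodic/E_periodic.
have [D D_gt0 D_L] := index_scale_inL u_indep.
have [R scrW_le] : exists R, forall x j, scrW u W x -> (`|x ord0 j| <= R)%N.
  exists (\max_(e <- E) \max_j `|e ord0 j|%N) => x j /scrW_E Ex.
  apply: leq_trans (leq_bigmax_seq _ Ex isT).
  exact: (leq_bigmax (F := fun j => `|x ord0 j|%N) j).
have [T [T_gt1 RT D_T]] : exists T, [/\ 1 < T, 2 * R < T & D %| T]%N.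
  exists (D * (2 * R).+2)%N; have := leq_pmull (2 * R).+2 D_gt0.
  by split; [lia | lia | apply: dvdn_mulr].
apply: (exists_min_complement (rho := map_mx (intr : int -> 'Z_T))
  u_indep piD pi_eq0 W_sub N_cover N_unique).
- by move=> x /(map_intr_ker_inL T_gt1 D_T D_L).
- move=> x y scrW_x scrW_y.
  exact: (map_intr_inj_bounded T_gt1 RT (scrW_le x ^~ scrW_x) (scrW_le y ^~ scrW_y)).
- by move=> y /(inL_lift_inP T_gt1).
Qed.
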